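(* Let $X=\{x_1,\dots,x_m\} \subset \mathbb{R}^n$ be a finite set of vectors, let $\alpha>0$, $\lambda \ge 0$, and $w_{ij} \ge 0$ for $j=2,\dots,m$, $i=1,\dots,j-1$. Let $z^* = \begin{bmatrix}(z_1^* )^T & \dots & (z_m^* )^T\end{bmatrix}^T \in \mathbb{R}^{mn}$ (with each $z_i^* \in \mathbb{R}^n$) be a local optimal solution of \[ \min_{z \in \mathbb{R}^{mn}} \; g(z;\alpha) := \sum_{i=1}^m \|x_i - z_i\|^2 + \lambda \sum_{j=2}^m \sum_{i=1}^{j-1} w_{ij}\Bigl(1 - e^{-\alpha \|z_i - z_j\|^2}\Bigr), \] where $z = \begin{bmatrix} z_1^T & \dots & z_m^T\end{bmatrix}^T$ with $z_i \in \mathbb{R}^n$. Then $z_1^*,\dots,z_m^*$ all lie in the convex hull of $X$.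
   Context: $\|\cdot\|$ denotes the Euclidean norm. *)

From mathcomp Require Import all_boot all_order all_algebra.
From mathcomp Require Import all_classical all_reals all_analysis.
Set Implicit Arguments. Unset Strict Implicit. Unset Printing Implicit Defensive.
Import Order.TTheory GRing.Theory Num.Theory.
Local Open Scope ring_scope.

Definition sqnorm (R : realType) (n : nat) (v : 'rV[R]_n) : R :=
  \sum_(k < n) (v 0 k) ^+ 2.

(* z = (z_1, ..., z_m) in R^{mn}, represented blockwise as z : 'I_m -> 'rV_n *)
Definition gobj (R : realType) (n m : nat) (x : 'I_m -> 'rV[R]_n)
  (alpha lam : R) (w : 'I_m -> 'I_m -> R) (z : 'I_m -> 'rV[R]_n) : R :=
  \sum_(i < m) sqnorm (x i - z i)
  + lam * \sum_(j < m) \sum_(i < m | (i < j)%N)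
            w i j * (1 - expR (- alpha * sqnorm (z i - z j))).

Definition bsqdist (R : realType) (n m : nat) (z z' : 'I_m -> 'rV[R]_n) : R :=
  \sum_(i < m) sqnorm (z i - z' i).

Definition local_min (R : realType) (n m : nat)
  (f : ('I_m -> 'rV[R]_n) -> R) (zs : 'I_m -> 'rV[R]_n) : Prop :=
  exists eps : R, 0 < eps /\
    forall z, bsqdist z zs < eps ^+ 2 -> f zs <= f z.

Definition in_conv_hull (R : realType) (n m : nat) (x : 'I_m -> 'rV[R]_n)
  (v : 'rV[R]_n) : Prop :=
  exists mu : 'I_m -> R, (forall k, 0 <= mu k) /\ \sum_(k < m) mu k = 1 /\
    v = \sum_(k < m) mu k *: x k.

(* At a local minimiser z the gradient of g vanishes.  Concavity of
   s |-> 1 - exp (- alpha s) bounds g (z + t d) above by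
   g z + t <grad g z, d> + t^2 K(d) with K(d) >= 0, so local minimality kills
   the first-order term for every direction d; taking d = grad g z gives
   grad g z = 0.  Written out, this says (I + L) z = x, where L is the graph
   Laplacian of the nonnegative weights
   c_ij = lam alpha (w_ij e^{-alpha |z_i - z_j|^2}, symmetrised).  By the
   discrete minimum principle I + L is invertible with an entrywise
   nonnegative inverse, whose rows sum to 1 because (I + L) 1 = 1; hence
   z_i = sum_k ((I + L)^-1)_ik x_k is a convex combination of the x_k. *)

From mathcomp Require Import all_boot all_order all_algebra.
From mathcomp Require Import all_classical all_reals all_analysis.
From mathcomp.algebra_tactics Require Import ring lra.
Set Implicit Arguments.
Unset Strict Implicit.
Unset Printing Implicit Defensive.

Import Order.TTheory GRing.Theory Num.Theory.
Local Open Scope ring_scope.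

Section Scalar.
Variable R : realType.

Lemma one_sub_expR_le_tangent (a s u : R) :
  1 - expR (- a * (s + u)) <= 1 - expR (- a * s) + a * expR (- a * s) * u.
Proof.
have -> : - a * (s + u) = - a * s + - a * u by ring.
rewrite expRD.
have tangent := expR_ge1Dx (- a * u).
have := ler_wpM2l (ltW (expR_gt0 (- a * s))) tangent.
lra.
Qed.

Lemma first_order_coef_eq0 (L K D E : R) : 0 <= K -> 0 <= D -> 0 < E ->
  (forall t, t ^+ 2 * D < E -> 0 <= t * L + t ^+ 2 * K) -> L = 0.
Proof.
move=> K_ge0 D_ge0 E_gt0 near0; apply/eqP/negPn/negP => L_neq0.
have q_gt0 : 0 < L ^+ 2 by rewrite exprn_even_gt0.
have K1_gt0 : 0 < K + 1 by lra.
have qD_ge0 : 0 <= L ^+ 2 * D by rewrite mulr_ge0 ?sqr_ge0.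
(* [t = - e L] with [e] small enough that [t^2 D < E] and [e K < 1] *)
set e := E / (E * (K + 1) + L ^+ 2 * D).
have den_gt0 : 0 < E * (K + 1) + L ^+ 2 * D.
  by have := mulr_gt0 E_gt0 K1_gt0; lra.
have e_gt0 : 0 < e by exact: divr_gt0.
have eE : e * (K + 1) * E + e * (L ^+ 2 * D) = E.
  by rewrite -mulrA [(K + 1) * E]mulrC -mulrDr divfK ?gt_eqF.
have eqD_ge0 := mulr_ge0 (ltW e_gt0) qD_ge0.
have eKE_gt0 := mulr_gt0 (mulr_gt0 e_gt0 K1_gt0) E_gt0.
have eK : e * (K + 1) <= 1 by rewrite -(ler_pM2r E_gt0) mul1r; lra.
have e_le1 : e <= 1 by have := mulr_ge0 (ltW e_gt0) K_ge0; lra.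
have small : (- L * e) ^+ 2 * D < E.
  have -> : (- L * e) ^+ 2 * D = e * (e * (L ^+ 2 * D)) by ring.
  have : e * (e * (L ^+ 2 * D)) <= e * (L ^+ 2 * D) by rewrite ler_piMl.
  lra.
have := near0 _ small.
have -> : - L * e * L + (- L * e) ^+ 2 * K = L ^+ 2 * e * (e * K - 1) by ring.
rewrite (pmulr_rge0 _ (mulr_gt0 q_gt0 e_gt0)).
by move: eK; rewrite mulrDr mulr1; lra.
Qed.

End Scalar.

Section Euclid.
Variables (R : realType) (n : nat).
Implicit Types (a b c d : 'rV[R]_n) (t : R).

Definition dot a b : R := \sum_k a 0 k * b 0 k.

Lemma dotvv a : dot a a = sqnorm a.
Proof. by apply: eq_bigr => k _; rewrite expr2. Qed.

Lemma dotDl a b c : dot (a + b) c = dot a c + dot b c.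
Proof. by rewrite -big_split; apply: eq_bigr => k _; rewrite !mxE mulrDl. Qed.

Lemma dotZl t a b : dot (t *: a) b = t * dot a b.
Proof. by rewrite mulr_sumr; apply: eq_bigr => k _; rewrite !mxE mulrA. Qed.

Lemma dot_suml I (r : seq I) (P : pred I) (f : I -> 'rV[R]_n) b :
  dot (\sum_(i <- r | P i) f i) b = \sum_(i <- r | P i) dot (f i) b.
Proof.
rewrite /dot exchange_big; apply: eq_bigr => k _.
by rewrite summxE mulr_suml.
Qed.

Lemma dot_diff_split a b c d : dot (a - b) (c - d) = dot (a - b) c + dot (b - a) d.
Proof. by rewrite /dot -big_split; apply: eq_bigr => k _; rewrite /= !mxE; ring. Qed.

Lemma sqnorm_ge0 a : 0 <= sqnorm a.
Proof. by apply: sumr_ge0 => k _; rewrite sqr_ge0. Qed.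

Lemma sqnorm_eq0 a : sqnorm a = 0 -> a = 0.
Proof.
move=> a0; apply/rowP => k; rewrite mxE.
have /eqP : a 0 k ^+ 2 = 0 by apply: (psumr_eq0P _ a0) => // j _; rewrite sqr_ge0.
by rewrite sqrf_eq0 => /eqP.
Qed.

Lemma sqnormN a : sqnorm (- a) = sqnorm a.
Proof. by apply: eq_bigr => k _; rewrite mxE sqrrN. Qed.

Lemma sqnormZ t a : sqnorm (t *: a) = t ^+ 2 * sqnorm a.
Proof. by rewrite mulr_sumr; apply: eq_bigr => k _; rewrite mxE exprMn. Qed.

Lemma sqnormDZ a b t :
  sqnorm (a + t *: b) = sqnorm a + t * (2 * dot a b) + t ^+ 2 * sqnorm b.
Proof.
rewrite /sqnorm /dot !mulr_sumr -!big_split /=; apply: eq_bigr => k _.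
by rewrite !mxE; ring.
Qed.

End Euclid.

Section ShiftedLaplacian.
Variables (R : realType) (m : nat) (c : 'I_m -> 'I_m -> R).

Definition shifted_laplacian : 'M[R]_m :=
  diag_mx (\row_i (1 + \sum_j c i j)) - \matrix_(i, j) c i j.

Local Notation M := shifted_laplacian.

Lemma shifted_laplacianE p (v : 'M[R]_(m, p)) i k :
  (M *m v) i k = v i k + \sum_j c i j * (v i k - v j k).
Proof.
rewrite mulmxBl mul_diag_mx !mxE.
under [X in _ - X]eq_bigr do rewrite mxE.
under [X in _ = _ + X]eq_bigr do rewrite mulrBr.
by rewrite sumrB -mulr_suml; ring.
Qed.

Hypothesis c_ge0 : forall i j, 0 <= c i j.

(* At an index where v is smallest every Laplacian term is nonpositive. *)
Lemma shifted_laplacian_min_principle (v : 'cV[R]_m) :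
  (forall i, 0 <= (M *m v) i 0) -> forall i, 0 <= v i 0.
Proof.
move=> Mv_ge0 i.
have [i0 _ v_min] := @arg_minP _ _ _ i predT (fun j => v j 0) isT.
have := Mv_ge0 i0; rewrite shifted_laplacianE.
have : \sum_j c i0 j * (v i0 0 - v j 0) <= 0.
  by apply: sumr_le0 => j _; rewrite mulr_ge0_le0 // subr_le0 v_min.
have := v_min i isT; lra.
Qed.

Lemma shifted_laplacian_unit : M \in unitmx.
Proof.
rewrite -unitmx_tr unitmxE unitfE; apply/negP => /det0P [v v_neq0 vM0].
move/eqP: v_neq0; apply; apply/matrixP => a b; rewrite (ord1 a) mxE.
have Mv0 : M *m v^T = 0 by rewrite -[M]trmxK -trmx_mul vM0 trmx0.
have vT_ge0 : forall i, 0 <= v^T i 0.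
  by apply: shifted_laplacian_min_principle => i; rewrite Mv0 mxE.
have NvT_ge0 : forall i, 0 <= (- v^T) i 0.
  by apply: shifted_laplacian_min_principle => i; rewrite mulmxN Mv0 oppr0 mxE.
by have := vT_ge0 b; have := NvT_ge0 b; rewrite !mxE; lra.
Qed.

Lemma invmx_shifted_laplacian_ge0 i j : 0 <= invmx M i j.
Proof.
have := @shifted_laplacian_min_principle (col j (invmx M)) _ i; rewrite mxE; apply.
move=> k; rewrite colE mulmxA mulmxV ?mul1mx ?shifted_laplacian_unit // !mxE.
by case: (k == j).
Qed.

Lemma invmx_shifted_laplacian_rowsum i : \sum_j invmx M i j = 1.
Proof.
have M1 : M *m const_mx 1 = const_mx 1 :> 'cV[R]_m.
  apply/matrixP => k l; rewrite shifted_laplacianE !mxE big1 ?addr0 // => j _.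
  by rewrite !mxE subrr mulr0.
have /matrixP/(_ i 0) : invmx M *m const_mx 1 = const_mx 1 :> 'cV[R]_m.
  by rewrite -{1}M1 mulmxA mulVmx ?mul1mx ?shifted_laplacian_unit.
by rewrite !mxE => <-; apply: eq_bigr => j _; rewrite mxE mulr1.
Qed.

Lemma shifted_laplacian_conv_hull n (x z : 'I_m -> 'rV[R]_n) :
  (forall i, z i + \sum_j c i j *: (z i - z j) = x i) ->
  forall i, in_conv_hull x (z i).
Proof.
move=> Mz_x i.
have MZ_X : M *m \matrix_j z j = \matrix_j x j.
  apply/matrixP => a k; rewrite shifted_laplacianE !mxE -Mz_x !mxE summxE.
  by congr (_ + _); apply: eq_bigr => j _; rewrite !mxE.
exists (fun k => invmx M i k); split; first exact: invmx_shifted_laplacian_ge0.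
split; first exact: invmx_shifted_laplacian_rowsum.
have -> : z i = row i (invmx M *m \matrix_j x j).
  by rewrite -MZ_X mulmxA mulVmx ?mul1mx ?shifted_laplacian_unit // rowK.
rewrite row_mul mulmx_sum_row; apply: eq_bigr => k _.
by rewrite rowK !mxE.
Qed.

End ShiftedLaplacian.

Lemma sum_pairs_dot (R : realType) (n m : nat) (A : 'I_m -> 'I_m -> R)
    (u d : 'I_m -> 'rV[R]_n) :
  \sum_j \sum_i A i j * dot (u i - u j) (d i - d j) =
  \sum_i dot (\sum_j (A i j + A j i) *: (u i - u j)) (d i).
Proof.
under eq_bigr do under eq_bigr do rewrite dot_diff_split mulrDr.
under [RHS]eq_bigr do rewrite dot_suml.
under [RHS]eq_bigr do under eq_bigr do rewrite dotZl mulrDl.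
under eq_bigr do rewrite big_split; under [RHS]eq_bigr do rewrite big_split.
by rewrite !big_split /=; congr (_ + _); apply: exchange_big.
Qed.

Section Objective.
Variables (R : realType) (n m : nat) (x : 'I_m -> 'rV[R]_n) (alpha lam : R).
Variable w : 'I_m -> 'I_m -> R.
Hypotheses (alpha_gt0 : 0 < alpha) (lam_ge0 : 0 <= lam).
Hypothesis w_ge0 : forall i j : 'I_m, (i < j)%N -> 0 <= w i j.
Variable z : 'I_m -> 'rV[R]_n.

Local Notation g := (gobj x alpha lam w).

Definition coupling (i j : 'I_m) : R :=
  if (i < j)%N then w i j * expR (- alpha * sqnorm (z i - z j)) else 0.

Definition laplacian_weight (i j : 'I_m) : R :=
  lam * alpha * (coupling i j + coupling j i).

Definition half_gradient (i : 'I_m) : 'rV[R]_n :=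
  (z i - x i) + \sum_j laplacian_weight i j *: (z i - z j).

Definition curvature (d : 'I_m -> 'rV[R]_n) : R :=
  \sum_i sqnorm (d i) + lam * alpha * \sum_j \sum_i coupling i j * sqnorm (d i - d j).

Lemma coupling_ge0 i j : 0 <= coupling i j.
Proof.
by rewrite /coupling; case: ifP => // lt_ij; rewrite mulr_ge0 ?w_ge0 ?expR_ge0.
Qed.

Lemma laplacian_weight_ge0 i j : 0 <= laplacian_weight i j.
Proof. by rewrite mulr_ge0 ?addr_ge0 ?coupling_ge0 ?mulr_ge0 ?(ltW alpha_gt0). Qed.

Lemma curvature_ge0 d : 0 <= curvature d.
Proof.
rewrite addr_ge0 ?sumr_ge0 // => [i _|]; first exact: sqnorm_ge0.
rewrite !mulr_ge0 ?(ltW alpha_gt0) ?sumr_ge0 // => j _; rewrite sumr_ge0 // => i _.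
by rewrite mulr_ge0 ?coupling_ge0 ?sqnorm_ge0.
Qed.

Lemma fidelity_shift (d : 'I_m -> 'rV[R]_n) (t : R) :
  \sum_i sqnorm (x i - (z i + t *: d i)) =
  \sum_i sqnorm (x i - z i) + t * (2 * \sum_i dot (z i - x i) (d i))
  + t ^+ 2 * \sum_i sqnorm (d i).
Proof.
rewrite !mulr_sumr -!big_split /=; apply: eq_bigr => i _.
by rewrite -sqnormN opprB [_ + _ - x i]addrAC sqnormDZ -[x i - z i]opprB sqnormN.
Qed.

Lemma penalty_shift_le (d : 'I_m -> 'rV[R]_n) (t : R) :
  \sum_(j < m) \sum_(i < m | (i < j)%N)
     w i j * (1 - expR (- alpha * sqnorm ((z i + t *: d i) - (z j + t *: d j))))
  <= \sum_(j < m) \sum_(i < m | (i < j)%N) w i j * (1 - expR (- alpha * sqnorm (z i - z j)))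
     + t * (2 * alpha * \sum_j \sum_i coupling i j * dot (z i - z j) (d i - d j))
     + t ^+ 2 * (alpha * \sum_j \sum_i coupling i j * sqnorm (d i - d j)).
Proof.
rewrite !mulr_sumr -!big_split /=; apply: ler_sum => j _.
rewrite !mulrA !mulr_sumr big_mkcond [X in _ <= X + _ + _]big_mkcond -!big_split /=.
apply: ler_sum => i _.
rewrite /coupling; case: ifP => [lt_ij|_]; last by rewrite !(mulr0, mul0r, addr0).
have -> : (z i + t *: d i) - (z j + t *: d j) = (z i - z j) + t *: (d i - d j).
  by rewrite scalerBr opprD addrACA.
rewrite sqnormDZ -[sqnorm _ + _ + _]addrA.
apply: le_trans (ler_wpM2l (w_ge0 lt_ij) (one_sub_expR_le_tangent _ _ _)) _.
by rewrite le_eqVlt; apply/orP; left; apply/eqP; ring.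
Qed.

Lemma gobj_shift_le (d : 'I_m -> 'rV[R]_n) (t : R) :
  g (fun i => z i + t *: d i) <=
  g z + t * (2 * \sum_i dot (half_gradient i) (d i)) + t ^+ 2 * curvature d.
Proof.
have gradient : \sum_i dot (half_gradient i) (d i) = \sum_i dot (z i - x i) (d i)
    + lam * alpha * \sum_j \sum_i coupling i j * dot (z i - z j) (d i - d j).
  rewrite sum_pairs_dot mulr_sumr -big_split /=; apply: eq_bigr => i _.
  rewrite /half_gradient dotDl -dotZl scaler_sumr; congr (_ + dot _ _).
  by apply: eq_bigr => j _; rewrite scalerA.
rewrite /gobj fidelity_shift gradient /curvature.
have := ler_wpM2l lam_ge0 (penalty_shift_le d t).
lra.
Qed.

Lemma half_gradient_eq0 : local_min g z -> forall i, half_gradient i = 0.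
Proof.
move=> [eps [eps_gt0 z_min]].
set r := half_gradient.
have D_ge0 : 0 <= \sum_i sqnorm (r i) by apply: sumr_ge0 => i _; exact: sqnorm_ge0.
have slope0 : 2 * \sum_i dot (r i) (r i) = 0.
  apply: (first_order_coef_eq0 (curvature_ge0 r) D_ge0 (exprn_gt0 2 eps_gt0)) => t small.
  have : g z <= g (fun i => z i + t *: r i).
    apply: z_min; rewrite /bsqdist.
    by under eq_bigr do rewrite addrC addKr sqnormZ; rewrite -mulr_sumr.
  have := gobj_shift_le r t; lra.
have : \sum_i sqnorm (r i) = 0.
  by under eq_bigr do rewrite -dotvv; move: slope0; lra.
move=> sum0 i; apply: sqnorm_eq0.
by apply: (psumr_eq0P _ sum0) => // j _; exact: sqnorm_ge0.
Qed.

End Objective.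

Theorem proposition1 (R : realType) (n m : nat) (x : 'I_m -> 'rV[R]_n)
  (alpha lam : R) (w : 'I_m -> 'I_m -> R) (zs : 'I_m -> 'rV[R]_n) :
  0 < alpha -> 0 <= lam ->
  (forall i j : 'I_m, (i < j)%N -> 0 <= w i j) ->
  local_min (gobj x alpha lam w) zs ->
  forall i : 'I_m, in_conv_hull x (zs i).
Proof.
move=> alpha_gt0 lam_ge0 w_ge0 zs_min.
apply: (shifted_laplacian_conv_hull (laplacian_weight_ge0 alpha_gt0 lam_ge0 w_ge0 zs)) => i.
apply/eqP; rewrite -subr_eq0 addrAC; apply/eqP.
exact (half_gradient_eq0 alpha_gt0 lam_ge0 w_ge0 zs_min i).
Qed.
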